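(* Let $\alpha\in(0,\tfrac12)$. Then $h$, regarded as a function on $\mathbb T$ via $h(e^{i\theta})=h(\theta)$, satisfies $$|h(z_1)-h(z_2)|\le\cosh(\pi)\,d(z_1,z_2)^{1-2\alpha}\quad\text{for all }z_1,z_2\in\mathbb T.$$
   Context: $\mathbb T$ is the unit circle; for $\theta\in\mathbb R$, $|\theta|_o$ is the absolute value of the representative of $\theta$ mod $2\pi$ in $(-\pi,\pi]$; $d(e^{i\theta_1},e^{i\theta_2})=|\theta_1-\theta_2|_o$ is the geodesic distance. $h(\theta)=\sin\theta/|\theta|_o^{2\alpha}$ for $\theta\notin2\pi\mathbb Z$ and $h(\theta)=0$ for $\theta\in2\pi\mathbb Z$ (a $2\pi$-periodic function). *)

From Stdlib Require Import Reals Lra ZArith ClassicalEpsilon.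
Open Scope R_scope.

(* x ^ y for x >= 0 real exponent, with 0 ^ y = 0 (y > 0 in our use). *)
Definition rpow (x y : R) : R := if Req_EM_T x 0 then 0 else Rpower x y.

(* representative of theta mod 2pi in (-pi, pi] *)
Definition orep (theta : R) : R :=
  theta - 2 * PI * IZR (1 - up (- ((theta - PI) / (2 * PI))))%Z.
(* 1 - up (-t) = ceil t, so the result lies in (-pi, pi]. *)

Definition oabs (theta : R) : R := Rabs (orep theta).

Definition in2piZ (theta : R) : Prop := exists k : Z, theta = 2 * PI * IZR k.

Definition h (alpha : R) (theta : R) : R :=
  match excluded_middle_informative (in2piZ theta) with
  | left _ => 0
  | right _ => sin theta / rpow (oabs theta) (2 * alpha)
  end.

(* geodesic distance between e^{i t1} and e^{i t2} *)
Definition dT (t1 t2 : R) : R := oabs (t1 - t2).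

(* With b = 2 alpha, h is the 2pi-periodic extension of g(x) = sin x / |x|^b
   from (-pi, pi], and g is odd.  For 0 < y <= x, writing
   g x - g y = (sin x - sin y) / x^b + sin y (x^-b - y^-b) and using
   |sin x - sin y| <= x - y, |sin y| <= y and y^(1-b) <= x^(1-b) gives
   |g x - g y| <= 2 (x - y) / x^b <= 2 (x - y)^(1-b).  For points of opposite
   sign, |sin x| <= min(x, pi - x) gives |g x| <= min(x, pi - x)^(1-b), and that
   minimum is at most the circle distance.  Finally 2 < cosh pi. *)

From Stdlib Require Import Reals Lra Lia ClassicalEpsilon.
Open Scope R_scope.

Lemma PI_gt_3 : 3 < PI.
Proof. generalize PI2_3_2; lra. Qed.

Lemma two_le_cosh_PI : 2 <= cosh PI.
Proof.
  unfold cosh.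
  assert (1 + PI < exp PI) by (apply exp_ineq1; generalize PI_gt_3; lra).
  generalize (exp_pos (- PI)) PI_gt_3; lra.
Qed.

Lemma sin_Lipschitz x y : Rabs (sin x - sin y) <= Rabs (x - y).
Proof.
  destruct (MVT_abs sin cos y x) as [c [-> _]].
  { intros c _; apply derivable_pt_lim_sin. }
  rewrite <- (Rmult_1_l (Rabs (x - y))) at 2.
  apply Rmult_le_compat_r; [apply Rabs_pos|].
  apply Rabs_le, COS_bound.
Qed.

Lemma Rabs_sin_le x : Rabs (sin x) <= Rabs x.
Proof. generalize (sin_Lipschitz x 0); rewrite sin_0, !Rminus_0_r; auto. Qed.

Lemma sin_plus_2kPI x k : sin (x + 2 * IZR k * PI) = sin x.
Proof.
  apply Rminus_diag_uniq; rewrite form4, sin_eq_0_1; [ring|].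
  exists k; field.
Qed.

Lemma rpow_Rpower x c : 0 < x -> rpow x c = Rpower x c.
Proof. intros Hx; unfold rpow; destruct (Req_EM_T x 0); [lra | reflexivity]. Qed.

Lemma rpow_ge_0 x c : 0 <= rpow x c.
Proof. unfold rpow; destruct (Req_EM_T x 0); [lra | left; apply exp_pos]. Qed.

Lemma rpow_le_compat_l c a b : 0 <= c -> 0 <= a <= b -> rpow a c <= rpow b c.
Proof.
  intros Hc Hab; destruct (Req_dec a 0) as [->|Ha].
  - unfold rpow at 1; destruct (Req_EM_T 0 0); [apply rpow_ge_0 | lra].
  - rewrite !rpow_Rpower by lra; apply Rle_Rpower_l; lra.
Qed.

Lemma div_Rpower_self x b : 0 < x -> x / Rpower x b = Rpower x (1 - b).
Proof.
  intros Hx; apply (Rmult_eq_reg_r (Rpower x b)); [|apply Rgt_not_eq, exp_pos].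
  rewrite <- Rpower_plus, Rplus_comm, Rplus_minus, Rpower_1 by exact Hx.
  field; apply Rgt_not_eq, exp_pos.
Qed.

Lemma div_Rpower_le_rpow a m x b :
  0 <= b -> 0 <= a <= m -> m <= x -> a / Rpower x b <= rpow m (1 - b).
Proof.
  intros Hb Ham Hmx; destruct (Req_dec m 0) as [->|Hm].
  - replace a with 0 by lra; unfold Rdiv; rewrite Rmult_0_l; apply rpow_ge_0.
  - assert (HM : 0 < Rpower m b) by apply exp_pos.
    assert (HMX : Rpower m b <= Rpower x b) by (apply Rle_Rpower_l; lra).
    rewrite rpow_Rpower, <- div_Rpower_self by lra.
    apply Rle_trans with (m / Rpower x b).
    + apply Rmult_le_compat_r; [left; apply Rinv_0_lt_compat|]; lra.
    + apply Rmult_le_compat_l; [|apply Rinv_le_contravar]; lra.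
Qed.

Lemma orep_shift_ex t : exists k : Z, orep t = t + 2 * IZR k * PI.
Proof. unfold orep; eexists (- _)%Z; rewrite opp_IZR; ring. Qed.

Lemma orep_bounds t : - PI < orep t <= PI.
Proof.
  unfold orep; set (q := (t - PI) / (2 * PI)).
  assert (Hq : 2 * PI * q = t - PI) by (unfold q; field; generalize PI_gt_3; lra).
  destruct (archimed (- q)) as [Hup Hup1].
  rewrite minus_IZR; set (U := IZR (up (- q))) in *.
  generalize PI_gt_3; intros HPI.
  assert (2 * PI * (- q) < 2 * PI * U) by (apply Rmult_lt_compat_l; lra).
  assert (2 * PI * (U - - q) <= 2 * PI * 1) by (apply Rmult_le_compat_l; lra).
  split; nra.
Qed.

Lemma orep_plus_2kPI x k : - PI < x <= PI -> orep (x + 2 * IZR k * PI) = x.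
Proof.
  intros Hx; destruct (orep_shift_ex (x + 2 * IZR k * PI)) as [c Hc].
  generalize (orep_bounds (x + 2 * IZR k * PI)); rewrite Hc; intros Hr.
  assert (Hkc : IZR (k + c) = 0).
  { assert (Hlt : -1 < IZR (k + c) < 1)
      by (rewrite plus_IZR; generalize PI_gt_3; split; nra).
    destruct Hlt as [Hlo Hhi]; apply lt_IZR in Hlo, Hhi.
    replace (k + c)%Z with 0%Z by lia; reflexivity. }
  rewrite plus_IZR in Hkc.
  replace (x + 2 * IZR k * PI + 2 * IZR c * PI) with (x + 2 * (IZR k + IZR c) * PI)
    by ring.
  rewrite Hkc; ring.
Qed.

Lemma orep_periodic x k : orep (x + 2 * IZR k * PI) = orep x.
Proof.
  destruct (orep_shift_ex x) as [c Hc].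
  replace (x + 2 * IZR k * PI) with (orep x + 2 * IZR (k - c) * PI)
    by (rewrite Hc, minus_IZR; ring).
  apply orep_plus_2kPI, orep_bounds.
Qed.

Lemma oabs_periodic x k : oabs (x + 2 * IZR k * PI) = oabs x.
Proof. unfold oabs; rewrite orep_periodic; reflexivity. Qed.

Lemma oabs_small w : - PI <= w <= PI -> oabs w = Rabs w.
Proof.
  intros Hw; unfold oabs; destruct (Req_dec w (- PI)) as [->|Hn].
  - replace (- PI) with (PI + 2 * IZR (-1) * PI) at 1 by (simpl; ring).
    rewrite orep_plus_2kPI, Rabs_Ropp; [reflexivity|generalize PI_gt_3; lra].
  - replace w with (w + 2 * IZR 0 * PI) at 1 by (simpl; ring).
    rewrite orep_plus_2kPI; [reflexivity | lra].
Qed.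

Lemma oabs_opp w : oabs (- w) = oabs w.
Proof.
  destruct (orep_shift_ex w) as [k Hk].
  replace (- w) with (- orep w + 2 * IZR k * PI) by (rewrite Hk; ring).
  rewrite oabs_periodic, oabs_small, Rabs_Ropp; [reflexivity|].
  generalize (orep_bounds w); lra.
Qed.

Lemma Rmin_le_oabs_add u w : 0 <= u <= PI -> 0 <= w <= PI ->
  Rmin u (PI - u) <= oabs (u + w).
Proof.
  intros Hu Hw; destruct (Rle_dec (u + w) PI).
  - rewrite oabs_small, Rabs_right by lra; generalize (Rmin_l u (PI - u)); lra.
  - replace (u + w) with ((u + w - 2 * PI) + 2 * IZR 1 * PI) by (simpl; ring).
    rewrite oabs_periodic, oabs_small, Rabs_left1 by lra.
    generalize (Rmin_r u (PI - u)); lra.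
Qed.

Definition sin_over_pow (b x : R) : R := sin x / rpow (Rabs x) b.

Lemma sin_over_pow_0 b : sin_over_pow b 0 = 0.
Proof. unfold sin_over_pow; rewrite sin_0; unfold Rdiv; ring. Qed.

Lemma sin_over_pow_opp b x : sin_over_pow b (- x) = - sin_over_pow b x.
Proof. unfold sin_over_pow; rewrite sin_neg, Rabs_Ropp; unfold Rdiv; ring. Qed.

Lemma sin_over_pow_pos b x : 0 < x -> sin_over_pow b x = sin x / Rpower x b.
Proof. intros Hx; unfold sin_over_pow; rewrite Rabs_right, rpow_Rpower; lra. Qed.

Section SinOverPow.

Variable b : R.
Hypothesis Hb : 0 <= b <= 1.

Lemma Rabs_sin_over_pow_le m x : 0 <= m <= x -> Rabs (sin x) <= m ->
  Rabs (sin_over_pow b x) <= rpow m (1 - b).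
Proof.
  intros Hmx Hsin; destruct (Req_dec x 0) as [->|Hx].
  - rewrite sin_over_pow_0, Rabs_R0; apply rpow_ge_0.
  - rewrite sin_over_pow_pos by lra; unfold Rdiv.
    rewrite Rabs_mult, Rabs_inv, (Rabs_right (Rpower x b)) by (left; apply exp_pos).
    apply div_Rpower_le_rpow; generalize (Rabs_pos (sin x)); lra.
Qed.

Lemma Rabs_sin_over_pow_le_Rmin x : 0 <= x <= PI ->
  Rabs (sin_over_pow b x) <= rpow (Rmin x (PI - x)) (1 - b).
Proof.
  intros Hx; apply Rabs_sin_over_pow_le.
  - split; [apply Rmin_glb; lra | apply Rmin_l].
  - generalize (Rabs_sin_le x) (Rabs_sin_le (PI - x)); rewrite sin_PI_x.
    rewrite (Rabs_right x), (Rabs_right (PI - x)) by lra; intros; apply Rmin_glb; lra.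
Qed.

Lemma Rabs_sin_over_pow_sub_le x y : 0 < y <= x ->
  Rabs (sin_over_pow b x - sin_over_pow b y) <= 2 * ((x - y) / Rpower x b).
Proof.
  intros Hyx; rewrite !sin_over_pow_pos by lra.
  set (X := Rpower x b); set (Y := Rpower y b).
  assert (HY : 0 < Y) by apply exp_pos.
  assert (HYX : Y <= X) by (apply Rle_Rpower_l; lra).
  assert (Hratio : y / Y <= x / X).
  { unfold X, Y; rewrite !div_Rpower_self by lra; apply Rle_Rpower_l; lra. }
  assert (Hdiff : Rabs (sin x - sin y) <= x - y)
    by (generalize (sin_Lipschitz x y); rewrite (Rabs_right (x - y)) by lra; auto).
  assert (Hsy : Rabs (sin y) <= y)
    by (generalize (Rabs_sin_le y); rewrite (Rabs_right y) by lra; auto).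
  assert (Hinv : / X <= / Y) by (apply Rinv_le_contravar; lra).
  replace (sin x / X - sin y / Y) with
    ((sin x - sin y) / X + sin y * (/ X - / Y)) by (field; lra).
  eapply Rle_trans; [apply Rabs_triang|].
  unfold Rdiv; rewrite !Rabs_mult, Rabs_inv, (Rabs_right X), (Rabs_left1 (/ X - / Y))
    by lra.
  assert (Hsy' : Rabs (sin y) * - (/ X - / Y) <= y * / Y - y * / X)
    by (apply Rle_trans with (y * - (/ X - / Y)); [apply Rmult_le_compat_r|]; lra).
  assert (Hdiff' : Rabs (sin x - sin y) * / X <= (x - y) * / X)
    by (apply Rmult_le_compat_r; [left; apply Rinv_0_lt_compat|]; lra).
  unfold Rdiv in Hratio; lra.
Qed.

Lemma sin_over_pow_Holder_nonneg x y : 0 <= y <= x ->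
  Rabs (sin_over_pow b x - sin_over_pow b y) <= 2 * rpow (x - y) (1 - b).
Proof.
  intros Hyx; destruct (Req_dec y 0) as [->|Hy].
  - rewrite sin_over_pow_0, Rminus_0_r, Rminus_0_r.
    enough (Rabs (sin_over_pow b x) <= rpow x (1 - b))
      by (generalize (rpow_ge_0 x (1 - b)); lra).
    apply Rabs_sin_over_pow_le; [lra|].
    generalize (Rabs_sin_le x); rewrite (Rabs_right x) by lra; auto.
  - eapply Rle_trans; [apply Rabs_sin_over_pow_sub_le; lra|].
    apply Rmult_le_compat_l, div_Rpower_le_rpow; lra.
Qed.

Lemma sin_over_pow_Holder_opposite u w : 0 <= u <= PI -> 0 <= w <= PI ->
  Rabs (sin_over_pow b u - sin_over_pow b (- w)) <= 2 * rpow (oabs (u + w)) (1 - b).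
Proof.
  intros Hu Hw.
  assert (Hend : forall x y, 0 <= x <= PI -> 0 <= y <= PI ->
    Rabs (sin_over_pow b x) <= rpow (oabs (x + y)) (1 - b)).
  { intros x y Hx Hy; eapply Rle_trans; [apply Rabs_sin_over_pow_le_Rmin; lra|].
    apply rpow_le_compat_l; [lra|].
    split; [apply Rmin_glb; lra | apply Rmin_le_oabs_add; lra]. }
  replace (sin_over_pow b u - sin_over_pow b (- w))
    with (sin_over_pow b u + sin_over_pow b w) by (rewrite sin_over_pow_opp; ring).
  eapply Rle_trans; [apply Rabs_triang|].
  generalize (Hend u w Hu Hw) (Hend w u Hw Hu); rewrite (Rplus_comm w u); lra.
Qed.

Lemma sin_over_pow_Holder u v : - PI <= u <= PI -> - PI <= v <= PI ->
  Rabs (sin_over_pow b u - sin_over_pow b v) <= 2 * rpow (oabs (u - v)) (1 - b).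
Proof.
  assert (Hle : forall u v, v <= u -> - PI <= v -> u <= PI ->
    Rabs (sin_over_pow b u - sin_over_pow b v) <= 2 * rpow (oabs (u - v)) (1 - b)).
  { clear u v; intros u v Hvu Hv Hu; generalize PI_gt_3; intros HPI.
    destruct (Rle_dec 0 v); [|destruct (Rle_dec u 0)].
    - rewrite oabs_small, (Rabs_right (u - v)) by lra.
      apply sin_over_pow_Holder_nonneg; lra.
    - rewrite oabs_small, (Rabs_right (u - v)) by lra.
      replace (sin_over_pow b u - sin_over_pow b v)
        with (sin_over_pow b (- v) - sin_over_pow b (- u))
        by (rewrite !sin_over_pow_opp; ring).
      replace (u - v) with (- v - - u) by ring.
      apply sin_over_pow_Holder_nonneg; lra.
    - replace (u - v) with (u + - v) by ring.
      rewrite <- (Ropp_involutive v) at 1.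
      apply sin_over_pow_Holder_opposite; lra. }
  intros Hu Hv; destruct (Rle_dec v u); [apply Hle; lra|].
  rewrite Rabs_minus_sym, <- oabs_opp, Ropp_minus_distr; apply Hle; lra.
Qed.

End SinOverPow.

Lemma h_orep alpha t : h alpha t = sin_over_pow (2 * alpha) (orep t).
Proof.
  unfold h; destruct (excluded_middle_informative (in2piZ t)) as [[k ->]|_].
  - replace (2 * PI * IZR k) with (0 + 2 * IZR k * PI) by ring.
    rewrite orep_plus_2kPI, sin_over_pow_0; [reflexivity|].
    generalize PI_gt_3; lra.
  - destruct (orep_shift_ex t) as [k Hk].
    unfold sin_over_pow, oabs; rewrite Hk, sin_plus_2kPI; reflexivity.
Qed.

Lemma dT_orep t1 t2 : dT t1 t2 = oabs (orep t1 - orep t2).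
Proof.
  destruct (orep_shift_ex t1) as [k1 Hk1]; destruct (orep_shift_ex t2) as [k2 Hk2].
  rewrite Hk1, Hk2.
  replace (t1 + 2 * IZR k1 * PI - (t2 + 2 * IZR k2 * PI))
    with (t1 - t2 + 2 * IZR (k1 - k2) * PI) by (rewrite minus_IZR; ring).
  rewrite oabs_periodic; reflexivity.
Qed.

Theorem mainTheorem14 (alpha : R) (Ha : 0 < alpha < 1 / 2) :
  forall t1 t2 : R,
    Rabs (h alpha t1 - h alpha t2) <= cosh PI * rpow (dT t1 t2) (1 - 2 * alpha).
Proof.
  intros t1 t2; rewrite !h_orep, dT_orep.
  assert (Hrep : forall t, - PI <= orep t <= PI)
    by (intros t; generalize (orep_bounds t); lra).
  eapply Rle_trans; [apply sin_over_pow_Holder; auto; lra|].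
  apply Rmult_le_compat_r; [apply rpow_ge_0 | apply two_le_cosh_PI].
Qed.
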